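(* Let $\mathsf{X}=\mathsf{Y}=\mathbb{R}^d$ with probability measures $\mu,\nu$ and cost $c(x,y)=\|x-y\|^2$, let $\pi_\varepsilon$ be the $(c,\varepsilon)$-cyclically invariant coupling for each $\varepsilon>0$ (assumed to exist), and assume $\pi_\varepsilon\to\pi_*$ weakly as $\varepsilon\to0$ for some $\pi_*\in\Pi(\mu,\nu)$. Let $\Gamma:=\operatorname{spt}\pi_*$, $\mathsf{X}_0:=\operatorname{proj}_{\mathsf{X}}\Gamma$, $\mathsf{Y}_0:=\operatorname{proj}_{\mathsf{Y}}\Gamma$, and assume $\mathsf{X}_0$ is strictly convex. Consider $(x,y)\in(\mathsf{X}_0\times\mathsf{Y}_0)\setminus\Gamma$ with $x\in\partial\mathsf{X}_0$. Suppose that $\pi_*$ is given by a transport map $T:\mathsf{X}_0\to\mathbb{R}^d$ (i.e., $\Gamma=\{(x',T(x')):x'\in\mathsf{X}_0\}$) which is continuous on $B_r(x)\cap\mathsf{X}_0$ for some $r>0$. Then $I(x,y)>0$.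
   Context: $\mathsf{X}_0$ is strictly convex if for distinct $x,x'\in\mathsf{X}_0$ the open segment $(x,x')$ is contained in $\operatorname{Int}\mathsf{X}_0$. $\Pi(\mu,\nu)$ is the set of couplings and $P:=\mu\otimes\nu$. A coupling $\pi$ is $(c,\varepsilon)$-cyclically invariant if $\pi\sim P$ and its density admits a version $\frac{d\pi}{dP}:\mathsf{X}\times\mathsf{Y}\to(0,\infty)$ with $\prod_{i=1}^k\frac{d\pi}{dP}(x_i,y_i)=\exp\big(-\frac1\varepsilon[\sum_{i=1}^k c(x_i,y_i)-\sum_{i=1}^k c(x_i,y_{i+1})]\big)\prod_{i=1}^k\frac{d\pi}{dP}(x_i,y_{i+1})$ for all $k$ and points, $y_{k+1}:=y_1$. The function $I$ is $I(x,y):=\sup_{k\ge2}\sup_{(x_i,y_i)_{i=2}^k\subset\Gamma}\sup_{\sigma\in\Sigma(k)}\sum_{i=1}^k c(x_i,y_i)-\sum_{i=1}^k c(x_i,y_{\sigma(i)})$ with $(x_1,y_1):=(x,y)$ and $\Sigma(k)$ the permutations of $\{1,\dots,k\}$. $B_r(x)$ is the open ball. *)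

From HB Require Import structures.
From mathcomp Require Import all_boot all_order all_algebra all_fingroup.
From mathcomp Require Import all_classical all_reals all_analysis.
Set Implicit Arguments. Unset Strict Implicit. Unset Printing Implicit Defensive.
Import Order.TTheory GRing.Theory Num.Theory.
Import numFieldNormedType.Exports.
Local Open Scope classical_set_scope.
Local Open Scope ring_scope.

Definition borelRd (R : realType) (d : nat) :=
  g_sigma_algebraType (@open 'rV[R]_d).

(* The measurable space X x Y = R^d x R^d with the product sigma-algebra
   (which is the Borel sigma-algebra of R^(2d)). *)
Definition XY (R : realType) (d : nat) := (borelRd R d * borelRd R d)%type.

Definition sqdist (R : realType) (d : nat) (x y : 'rV[R]_d) : R :=
  \sum_(i < d) (x ord0 i - y ord0 i) ^+ 2.

Definition eball (R : realType) (d : nat) (x : 'rV[R]_d) (r : R) :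
  set 'rV[R]_d := [set z | sqdist x z < r ^+ 2].

Definition is_coupling (R : realType) (d : nat)
  (mu nu : set (borelRd R d) -> \bar R) (pi : set (XY R d) -> \bar R) : Prop :=
  (forall A : set (borelRd R d), measurable A -> pi (A `*` setT) = mu A) /\
  (forall B : set (borelRd R d), measurable B -> pi (setT `*` B) = nu B).

Definition cyclically_invariant (R : realType) (d : nat)
  (c : 'rV[R]_d -> 'rV[R]_d -> R) (eps : R)
  (mu nu : set (borelRd R d) -> \bar R) (pi : set (XY R d) -> \bar R) : Prop :=
  exists f : XY R d -> R,
    [/\ (forall z, 0 < f z),
        measurable_fun setT f,
        (forall A : set (XY R d), measurable A ->
           pi A = (\int[mu \x nu]_(z in A) (f z)%:E)%E) &
        (forall (k : nat) (xs ys : 'I_k.+1 -> 'rV[R]_d),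
           \prod_(i < k.+1) f (xs i, ys i) =
           expR (- eps^-1 * (\sum_(i < k.+1) c (xs i) (ys i)
                             - \sum_(i < k.+1) c (xs i) (ys (ordS i))))
           * \prod_(i < k.+1) f (xs i, ys (ordS i)))].

Definition weak_cvg_at0 (R : realType) (d : nat)
  (pe : R -> set (XY R d) -> \bar R) (ps : set (XY R d) -> \bar R) : Prop :=
  forall h : 'rV[R]_d * 'rV[R]_d -> R, continuous h ->
    (exists M : R, forall z, `|h z| <= M) ->
    (fun e : R => (\int[pe e]_z (h z)%:E)%E) @ 0^'+ -->
      (\int[ps]_z (h z)%:E)%E.

Definition spt (R : realType) (d : nat) (p : set (XY R d) -> \bar R) :
  set ('rV[R]_d * 'rV[R]_d) :=
  [set z | forall U : set ('rV[R]_d * 'rV[R]_d), open U -> U z -> (0 < p U)%E].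

Definition strictly_convex (R : realType) (d : nat) (X0 : set 'rV[R]_d) :=
  forall x x', X0 x -> X0 x' -> x != x' ->
    forall t : R, 0 < t < 1 -> (X0°) ((1 - t) *: x + t *: x').

Definition boundary (R : realType) (d : nat) (A : set 'rV[R]_d) :=
  closure A `\` A°.

Definition Ifun (R : realType) (d : nat) (c : 'rV[R]_d -> 'rV[R]_d -> R)
  (Gam : set ('rV[R]_d * 'rV[R]_d)) (x y : 'rV[R]_d) : \bar R :=
  ereal_sup [set r%:E | r in
    [set r : R | exists (k : nat) (pts : 'I_k.+2 -> 'rV[R]_d * 'rV[R]_d)
                        (s : 'S_k.+2),
       [/\ pts ord0 = (x, y),
           (forall i, i != ord0 -> Gam (pts i)) &
           r = \sum_(i < k.+2) c (pts i).1 (pts i).2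
               - \sum_(i < k.+2) c (pts i).1 (pts (s i)).2]]].

From HB Require Import structures.
From mathcomp Require Import all_boot all_order all_algebra all_fingroup.
From mathcomp Require Import all_classical all_reals all_analysis.
From mathcomp Require Import ring lra.
Import Order.TTheory GRing.Theory Num.Theory.
Import numFieldNormedType.Exports.
Local Open Scope classical_set_scope.
Local Open Scope ring_scope.

(* Write y = T x0 and w := y - T x, which is nonzero because (x, y) is off the
   graph.  Strict convexity puts x_t := (1 - t) x + t x0 in the interior of X0,
   so x' := x_t + s w lies in X0 for small s, t > 0, and by continuity T x' is
   close to T x, whence <w, y - T x'> > 0.  The 2-cycle through (x', T x') and
   the 3-cycle through (x', T x') and (x0, y) have gains A and B with
   (1 - t) A + t B = 2 s <w, y - T x'> > 0, so one of them is positive. *)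

Section InteriorPerturbation.
Set Implicit Arguments. Unset Strict Implicit.
Variables (R : realType) (V : normedModType R).

Lemma interior_shift_small (A : set V) (a w : V) (rho : R) :
  (A°) a -> 0 < rho -> exists2 s, 0 < s & A (a + s *: w) /\ `|s *: w| < rho.
Proof.
move=> /nbhs_ballP [eta /= eta0 ballA] rho0.
have m0 : 0 < Order.min eta rho by rewrite lt_min eta0.
have w1 : 0 < `|w| + 1 by rewrite ltr_wpDl.
set s := Order.min eta rho / (`|w| + 1).
have s0 : 0 < s by rewrite divr_gt0.
have sw : `|s *: w| < Order.min eta rho.
  rewrite normrZ gtr0_norm // /s mulrAC ltr_pdivrMr //; nra.
exists s => //; split; last by apply: lt_le_trans sw _; rewrite ge_min lexx orbT.
apply: ballA; rewrite -ball_normE /= opprD addrA subrr add0r normrN.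
by apply: lt_le_trans sw _; rewrite ge_min lexx.
Qed.

Lemma segment_start_near (x x0 : V) (rho : R) :
  0 < rho -> exists t, 0 < t < 1 /\ `|x - ((1 - t) *: x + t *: x0)| < rho.
Proof.
move=> rho0; set u := x - x0.
have u1 : 0 < `|u| + 1 by rewrite ltr_wpDl.
set t := Order.min (1 / 2) (rho / (`|u| + 1)).
have t0 : 0 < t by rewrite lt_min !divr_gt0.
have t_half : t <= 1 / 2 by rewrite ge_min lexx.
have tu : t * (`|u| + 1) <= rho by rewrite -ler_pdivlMr // ge_min lexx orbT.
exists t; split; first by apply/andP; split; lra.
have -> : x - ((1 - t) *: x + t *: x0) = t *: u.
  by rewrite scalerBl scale1r scalerBr opprD opprB addrCA addrA subrK.
rewrite normrZ gtr0_norm //; nra.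
Qed.

End InteriorPerturbation.

Section SquaredDistance.
Set Implicit Arguments. Unset Strict Implicit.
Variables (R : realType) (d : nat).
Local Notation vec := 'rV[R]_d.

Definition dotv (u v : vec) : R := \sum_(i < d) u ord0 i * v ord0 i.

Lemma sqdist_cross (a b a' b' : vec) :
  sqdist a b + sqdist a' b' - sqdist a b' - sqdist a' b = 2 * dotv (a' - a) (b - b').
Proof.
rewrite /sqdist /dotv -big_split /= -!sumrB mulr_sumr; apply: eq_bigr => i _.
rewrite !mxE; ring.
Qed.

Lemma dotv_self_gt0 (w : vec) : w != 0 -> 0 < dotv w w.
Proof.
move=> w0; have [i wi] : exists i, w ord0 i != 0.
  apply: contrapT => wi0; move/eqP: w0; apply; apply/matrixP => a j.
  rewrite (ord1 a) mxE; apply: contrapT => wj; apply: wi0; exists j; exact/eqP.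
rewrite /dotv (bigD1 i) //= ltr_wpDr ?sumr_ge0 // => [j _|]; rewrite -expr2.
  exact: sqr_ge0.
by rewrite lt0r sqrf_eq0 wi sqr_ge0.
Qed.

Lemma coord_norm_le (v : vec) i : `|v ord0 i| <= `|v|.
Proof.
rewrite [leRHS]/Num.Def.normr /= mx_normrE; apply/bigmax_geP; right => /=.
by exists (ord0, i).
Qed.

Lemma dotv_norm_le (w v : vec) : `|dotv w v| <= (\sum_(i < d) `|w ord0 i|) * `|v|.
Proof.
rewrite /dotv mulr_suml; apply: le_trans (ler_norm_sum _ _ _) _.
by apply: ler_sum => i _; rewrite normrM ler_wpM2l // coord_norm_le.
Qed.

Lemma dotv_pos_near (w : vec) :
  w != 0 -> exists2 e, 0 < e & forall v, `|v| < e -> 0 < dotv w (w + v).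
Proof.
move=> w0; set S := \sum_(i < d) `|w ord0 i|.
have S0 : 0 <= S by apply: sumr_ge0.
have ww := dotv_self_gt0 w0.
exists (dotv w w / (S + 1)) => [|v v_small]; first by rewrite divr_gt0 // ltr_wpDl.
have -> : dotv w (w + v) = dotv w w + dotv w v.
  by rewrite /dotv -big_split; apply: eq_bigr => i _; rewrite mxE mulrDr.
have Sv : S * `|v| < dotv w w.
  apply: (@le_lt_trans _ _ (S * (dotv w w / (S + 1)))).
    by rewrite ler_wpM2l // ltW.
  by rewrite mulrA ltr_pdivrMr ?ltr_wpDl //; nra.
have := dotv_norm_le w v; rewrite -/S => /ler_normlP [wv _]; lra.
Qed.

Lemma sqdist_le_norm (x z : vec) : sqdist x z <= d%:R * `|x - z| ^+ 2.
Proof.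
have -> : d%:R * `|x - z| ^+ 2 = \sum_(i < d) `|x - z| ^+ 2.
  by rewrite sumr_const card_ord mulr_natl.
apply: ler_sum => i _.
have := coord_norm_le (x - z) i; rewrite !mxE => xz.
by rewrite -real_normK ?num_real // lerXn2r ?nnegrE.
Qed.

Lemma eball_nbhs (x : vec) (r : R) : 0 < r -> nbhs x (eball x r).
Proof.
move=> r0; have d1 : 0 < d%:R + 1 :> R by rewrite ltr_wpDl.
apply/nbhs_ballP; exists (r / (d%:R + 1)); first by rewrite /= divr_gt0.
move=> z; rewrite -ball_normE /= ltr_pdivlMr // => xz.
apply: le_lt_trans (sqdist_le_norm x z) _.
have q0 : 0 <= `|x - z| by [].
apply: (@le_lt_trans _ _ ((`|x - z| * (d%:R + 1)) ^+ 2)); last first.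
  by rewrite ltrXn2r // ?nnegrE ?mulr_ge0 ?ltW.
have d0 : 0 <= d%:R :> R by [].
by rewrite exprMn mulrC ler_wpM2l ?exprn_ge0 //; nra.
Qed.

Lemma continuous_within_eball (A : set vec) (T : vec -> vec) (x : vec) (r e : R) :
  0 < r -> {within eball x r `&` A, continuous T} -> A x -> 0 < e ->
  exists2 rho, 0 < rho & forall z, A z -> `|x - z| < rho -> `|T x - T z| < e.
Proof.
move=> r0 /subspace_continuousP /(_ x) contT Ax e0.
have eball_x := eball_nbhs x r0.
have Bx : (eball x r `&` A) x by split => //; apply: nbhs_singleton eball_x.
have /nbhs_ballP [rho1 /= rho10 ball_eball] := eball_x.
have /cvgrPdist_lt /(_ e e0) := contT Bx.
rewrite near_withinE => /nbhs_ballP [rho2 /= rho20 nearT].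
exists (Order.min rho1 rho2) => [|z Az]; first by rewrite lt_min rho10.
rewrite lt_min => /andP [xz1 xz2].
apply: nearT; first by rewrite -ball_normE.
by split => //; apply: ball_eball; rewrite -ball_normE.
Qed.

Lemma strictly_convex_perturb (X0 : set vec) (x x0 w : vec) (rho : R) :
  strictly_convex X0 -> X0 x -> X0 x0 -> x != x0 -> 0 < rho ->
  exists t s, [/\ 0 < t < 1, 0 < s,
    X0 ((1 - t) *: x + t *: x0 + s *: w)
    & `|x - ((1 - t) *: x + t *: x0 + s *: w)| < rho].
Proof.
move=> convX0 X0x X0x0 xx0 rho0; have rho2 : 0 < rho / 2 by rewrite divr_gt0.
have [t [t01 xt_near]] := segment_start_near x x0 rho2.
have [s s0 [X0x' sw]] := interior_shift_small w (convX0 _ _ X0x X0x0 xx0 _ t01) rho2.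
exists t, s; split => //; rewrite opprD addrA.
by apply: le_lt_trans (ler_normB _ _) _; lra.
Qed.

Lemma Ifun_ge_cycle c Gam (x y : vec) (g : R) k
  (pts : 'I_k.+2 -> vec * vec) (s : 'S_k.+2) :
  pts ord0 = (x, y) -> (forall i, i != ord0 -> Gam (pts i)) ->
  g = \sum_(i < k.+2) c (pts i).1 (pts i).2
      - \sum_(i < k.+2) c (pts i).1 (pts (s i)).2 ->
  (g%:E <= Ifun c Gam x y)%E.
Proof.
by move=> pts0 Gpts gE; apply: ereal_sup_ubound; exists g => //; exists k, pts, s.
Qed.

Lemma Ifun_ge_pair Gam (x y : vec) p :
  Gam p -> ((2 * dotv (p.1 - x) (y - p.2))%:E <= Ifun (@sqdist R d) Gam x y)%E.
Proof.
move=> Gp; pose pts (i : 'I_2) := if i == ord0 then (x, y) else p.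
apply: (Ifun_ge_cycle (pts := pts) (s := tperm ord0 ord_max)) => // [i|].
  by rewrite /pts => /negbTE ->.
have lift01 : lift ord0 ord0 = ord_max :> 'I_2 by apply/val_inj.
rewrite -sqdist_cross !big_ord_recl !big_ord0 lift01 tpermL tpermR /pts /=; ring.
Qed.

Lemma Ifun_ge_triple Gam (x y : vec) p q :
  Gam p -> Gam q ->
  ((2 * dotv (q.1 - p.1) (p.2 - q.2))%:E <= Ifun (@sqdist R d) Gam x y)%E.
Proof.
move=> Gp Gq.
pose pts (i : 'I_3) := match val i with 0 => (x, y) | 1 => p | _ => q end.
pose i1 : 'I_3 := lift ord0 ord0; pose i2 : 'I_3 := lift ord0 (lift ord0 ord0).
apply: (Ifun_ge_cycle (pts := pts) (s := tperm i1 i2)) => // [[[|[|[|]]]]//|].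
rewrite -sqdist_cross !big_ord_recl !big_ord0 tpermD // tpermL tpermR /pts /=; ring.
Qed.

Lemma Ifun_gt0_perturb Gam (x y x0 x' y' w : vec) (t s : R) :
  Gam (x', y') -> Gam (x0, y) -> 0 < t < 1 -> 0 < s ->
  x' = (1 - t) *: x + t *: x0 + s *: w -> 0 < dotv w (y - y') ->
  (0 < Ifun (@sqdist R d) Gam x y)%E.
Proof.
move=> Gx' Gx0 /andP [t0 t1] s0 x'E wpos.
set A := 2 * dotv (x' - x) (y - y'); set B := 2 * dotv (x0 - x') (y' - y).
have IA : (A%:E <= Ifun (@sqdist R d) Gam x y)%E := Ifun_ge_pair x y Gx'.
have IB : (B%:E <= Ifun (@sqdist R d) Gam x y)%E := Ifun_ge_triple x y Gx' Gx0.
have AB : (1 - t) * A + t * B = 2 * s * dotv w (y - y').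
  rewrite /A /B /dotv !mulr_sumr -big_split /=; apply: eq_bigr => j _.
  by rewrite x'E !mxE; ring.
have : 0 < (1 - t) * A + t * B by rewrite AB !mulr_gt0.
have [A0|A0] := ltP 0 A => [_|ABpos]; first by apply: lt_le_trans IA.
by apply: lt_le_trans IB; rewrite lte_fin; nra.
Qed.

End SquaredDistance.

Theorem lemma5p3 (R : realType) (d : nat)
  (mu nu : probability (borelRd R d) R)
  (pe : R -> probability (XY R d) R) (ps : probability (XY R d) R)
  (T : 'rV[R]_d -> 'rV[R]_d) (x y : 'rV[R]_d) :
  (forall eps : R, 0 < eps ->
     is_coupling mu nu (pe eps) /\
     cyclically_invariant (@sqdist R d) eps mu nu (pe eps)) ->
  is_coupling mu nu ps ->
  weak_cvg_at0 (fun e => pe e : set (XY R d) -> \bar R) ps ->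
  strictly_convex (fst @` spt ps) ->
  (fst @` spt ps) x -> (snd @` spt ps) y -> ~ spt ps (x, y) ->
  boundary (fst @` spt ps) x ->
  spt ps = [set (x', T x') | x' in fst @` spt ps] ->
  (exists r : R, 0 < r /\
     {within eball x r `&` (fst @` spt ps), continuous T}) ->
  (0 < Ifun (@sqdist R d) (spt ps) x y)%E.
Proof.
move=> _ _ _ convX0 X0x X0y offG _ GE [r [r0 contT]].
set X0 := fst @` spt ps in convX0 X0x X0y contT GE *.
have GT z : X0 z -> spt ps (z, T z) by move=> X0z; rewrite GE; exists z.
have [x0 X0x0 yE] : exists2 x0, X0 x0 & y = T x0.
  by case: X0y => z; rewrite GE => -[x0 X0x0 <-] <-; exists x0.
subst y.
have w0 : T x0 - T x != 0.
  by rewrite subr_eq0; apply: contra_notN offG => /eqP ->; exact: GT.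
have xx0 : x != x0 by apply: contraNneq w0 => <-; rewrite subrr.
have [e e0 dot_pos] := dotv_pos_near w0.
have [rho rho0 T_near] := continuous_within_eball r0 contT X0x e0.
have [t [s [t01 s0 X0x' xx']]] :=
  strictly_convex_perturb (T x0 - T x) convX0 X0x X0x0 xx0 rho0.
set x' := _ + s *: _ in X0x' xx'.
apply: (Ifun_gt0_perturb (GT _ X0x') (GT _ X0x0) t01 s0 erefl).
have -> : T x0 - T x' = T x0 - T x + (T x - T x') by rewrite addrA subrK.
by apply: dot_pos; apply: T_near.
Qed.
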